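(* Let $a>b>0$ and let $E$ be the ellipse $\frac{x^2}{a^2}+\frac{y^2}{b^2}=1$. For a 3-periodic billiard orbit $T$ in $E$, let $r,R$ be the inradius and circumradius of $T$, let $A'$ be the area of the excentral triangle of $T$ and $A''$ the area of the extouch triangle of $T$. Then $A'/A''=(2R/r)^2$, and this ratio is the same for all 3-periodic orbits in $E$.
   Context: A 3-periodic billiard orbit in the ellipse $E$ is a nondegenerate triangle $P_1P_2P_3$ with all vertices on $E$ such that at each vertex $P_i$ the normal line to $E$ at $P_i$ bisects the interior angle of the triangle at $P_i$. The excentral triangle has vertices at the three excenters of $T$. The extouch triangle has as vertices the three points where each excircle of $T$ touches the corresponding side (segment) of $T$. *)

From Stdlib Require Import Reals.
Open Scope R_scope.

Definition pt := (R * R)%type.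

Definition padd (p q : pt) : pt := (fst p + fst q, snd p + snd q).
Definition psub (p q : pt) : pt := (fst p - fst q, snd p - snd q).
Definition pscale (k : R) (p : pt) : pt := (k * fst p, k * snd p).
Definition dot (u v : pt) : R := fst u * fst v + snd u * snd v.
Definition det2 (u v : pt) : R := fst u * snd v - snd u * fst v.
Definition dist (p q : pt) : R := sqrt (dot (psub p q) (psub p q)).

Definition on_ellipse (a b : R) (p : pt) : Prop :=
  (fst p) ^ 2 / a ^ 2 + (snd p) ^ 2 / b ^ 2 = 1.

(* A normal vector to the ellipse at p (gradient of x^2/a^2 + y^2/b^2). *)
Definition ellipse_normal (a b : R) (p : pt) : pt :=
  (fst p / a ^ 2, snd p / b ^ 2).

Definition bisector_dir (P Q S : pt) : pt :=
  padd (pscale (/ dist Q P) (psub Q P)) (pscale (/ dist S P) (psub S P)).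

(* The normal line to E at P (through P) bisects the interior angle at P:
   both lines pass through P, so they coincide iff directions are parallel. *)
Definition normal_bisects (a b : R) (P Q S : pt) : Prop :=
  det2 (bisector_dir P Q S) (ellipse_normal a b P) = 0.

Definition nondegenerate (P1 P2 P3 : pt) : Prop :=
  det2 (psub P2 P1) (psub P3 P1) <> 0.

Definition billiard3 (a b : R) (P1 P2 P3 : pt) : Prop :=
  nondegenerate P1 P2 P3 /\
  on_ellipse a b P1 /\ on_ellipse a b P2 /\ on_ellipse a b P3 /\
  normal_bisects a b P1 P2 P3 /\
  normal_bisects a b P2 P3 P1 /\
  normal_bisects a b P3 P1 P2.

Definition tri_area (P1 P2 P3 : pt) : R :=
  Rabs (det2 (psub P2 P1) (psub P3 P1)) / 2.

Definition semiperimeter (P1 P2 P3 : pt) : R :=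
  (dist P2 P3 + dist P1 P3 + dist P1 P2) / 2.

Definition inradius (P1 P2 P3 : pt) : R :=
  tri_area P1 P2 P3 / semiperimeter P1 P2 P3.
Definition circumradius (P1 P2 P3 : pt) : R :=
  dist P2 P3 * dist P1 P3 * dist P1 P2 / (4 * tri_area P1 P2 P3).

(* Excenter opposite vertex P (the other vertices Q, S):
   barycentrics (-|QS| : |PS| : |PQ|). *)
Definition excenter (P Q S : pt) : pt :=
  let la := dist Q S in let lb := dist P S in let lc := dist P Q in
  pscale (/ (- la + lb + lc))
    (padd (pscale (- la) P) (padd (pscale lb Q) (pscale lc S))).

(* Orthogonal projection of X onto the line AB (tangency point of a circle
   centred at X tangent to line AB). *)
Definition foot (X A B : pt) : pt :=
  padd A (pscale (dot (psub X A) (psub B A) / dot (psub B A) (psub B A))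
                 (psub B A)).

Definition extouch_pt (P Q S : pt) : pt := foot (excenter P Q S) Q S.

Definition excentral_area (P1 P2 P3 : pt) : R :=
  tri_area (excenter P1 P2 P3) (excenter P2 P3 P1) (excenter P3 P1 P2).

Definition extouch_area (P1 P2 P3 : pt) : R :=
  tri_area (extouch_pt P1 P2 P3) (extouch_pt P2 P3 P1) (extouch_pt P3 P1 P2).

(* Let [la, lb, lc] be the side lengths and [D] twice the signed area of the triangle. In
   barycentric coordinates the excentral triangle has weight matrix of determinant
   [4 la lb lc] and the extouch triangle one of determinant [2 f1 f2 f3], where
   [f1 = - la + lb + lc], ...; by Heron's formula the area ratio is therefore
   [(la lb lc (la + lb + lc) / D ^ 2) ^ 2], which is exactly [(2 R / r) ^ 2].

   For the invariance write the vertices as [P_i = (a X_i, b Y_i)] with [X_i^2 + Y_i^2 = 1].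
   The reflection law at [P_i] says that [(1 - <Z_i, Z_j>) / |P_i P_j|] is the same for both
   chords through [P_i], hence equal to one constant [K] for all three chords. Squaring turns
   this into a symmetric biquadratic relation between [z_i = X_i + i Y_i] and [z_j]; a relation
   of this kind with three pairwise related distinct roots forces [K ^ 2] to be the positive
   root of [(a^2 - b^2)^2 k^2 + 2 (a^2 + b^2) k - 3], and then
   [2 R / r = (9 - k^2 (a^2 - b^2)^2) / (4 k^2 a^2 b^2)] depends on [a] and [b] only. *)

From Stdlib Require Import Reals Lra Psatz Classical.
From Coquelicot Require Import Complex.
Open Scope R_scope.

Lemma dist_comm p q : dist p q = dist q p.
Proof. unfold dist, dot, psub; simpl. f_equal. ring. Qed.

Lemma dist_ge0 p q : 0 <= dist p q.
Proof. apply sqrt_pos. Qed.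

Lemma dist_sqr p q : dist p q * dist p q = dot (psub p q) (psub p q).
Proof.
  unfold dist, dot, psub; simpl.
  rewrite sqrt_sqrt; [reflexivity | apply Rplus_le_le_0_compat; apply Rle_0_sqr].
Qed.

Lemma dot_comm u v : dot u v = dot v u.
Proof. unfold dot; ring. Qed.

Lemma dot_pscale_l k u v : dot (pscale k u) v = k * dot u v.
Proof. unfold dot, pscale; simpl; ring. Qed.

Lemma dot_pscale_r k u v : dot u (pscale k v) = k * dot u v.
Proof. unfold dot, pscale; simpl; ring. Qed.

Lemma det2_pscale k m u v : det2 (pscale k u) (pscale m v) = k * m * det2 u v.
Proof. unfold det2, pscale; simpl; ring. Qed.

Lemma det2_rotate P1 P2 P3 :
  det2 (psub P3 P2) (psub P1 P2) = det2 (psub P2 P1) (psub P3 P1).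
Proof. unfold det2, psub; simpl; ring. Qed.

Lemma pos_of_pairwise_sums_nonneg f1 f2 f3 :
  0 <= f1 + f2 -> 0 <= f1 + f3 -> 0 <= f2 + f3 -> 0 < f1 * f2 * f3 ->
  0 < f1 /\ 0 < f2 /\ 0 < f3.
Proof.
  intros H12 H13 H23 Hp.
  assert (key : forall g1 g2 g3, 0 <= g1 + g2 -> 0 <= g1 + g3 -> 0 < g1 * g2 * g3 -> 0 < g1).
  { intros g1 g2 g3 A2 A3 Ap. destruct (Rlt_or_le 0 g1); [assumption|].
    assert (0 <= g2 * g3) by nra. nra. }
  split; [|split].
  - exact (key f1 f2 f3 H12 H13 Hp).
  - apply (key f2 f1 f3); lra.
  - apply (key f3 f1 f2); lra.
Qed.

Definition bary (P1 P2 P3 : pt) (u1 u2 u3 : R) : pt :=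
  pscale (/ (u1 + u2 + u3)) (padd (pscale u1 P1) (padd (pscale u2 P2) (pscale u3 P3))).

Lemma bary_rotate P1 P2 P3 u1 u2 u3 : bary P2 P3 P1 u2 u3 u1 = bary P1 P2 P3 u1 u2 u3.
Proof.
  unfold bary, pscale, padd; simpl.
  replace (u2 + u3 + u1) with (u1 + u2 + u3) by ring. f_equal; ring.
Qed.

Lemma det2_bary P1 P2 P3 u1 u2 u3 v1 v2 v3 w1 w2 w3 :
  u1 + u2 + u3 <> 0 -> v1 + v2 + v3 <> 0 -> w1 + w2 + w3 <> 0 ->
  det2 (psub (bary P1 P2 P3 v1 v2 v3) (bary P1 P2 P3 u1 u2 u3))
       (psub (bary P1 P2 P3 w1 w2 w3) (bary P1 P2 P3 u1 u2 u3))
  = (u1 * (v2 * w3 - v3 * w2) - u2 * (v1 * w3 - v3 * w1) + u3 * (v1 * w2 - v2 * w1))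
    / ((u1 + u2 + u3) * (v1 + v2 + v3) * (w1 + w2 + w3))
    * det2 (psub P2 P1) (psub P3 P1).
Proof.
  intros Hu Hv Hw. unfold bary, det2, psub, padd, pscale; simpl.
  field. auto.
Qed.

Lemma tri_area_div A1 A2 A3 B1 B2 B3 c : 0 <= c ->
  det2 (psub B2 B1) (psub B3 B1) <> 0 ->
  det2 (psub A2 A1) (psub A3 A1) = c * det2 (psub B2 B1) (psub B3 B1) ->
  tri_area A1 A2 A3 / tri_area B1 B2 B3 = c.
Proof.
  intros Hc HB HA. unfold tri_area. rewrite HA, Rabs_mult, (Rabs_pos_eq c Hc).
  field. apply Rabs_no_R0. exact HB.
Qed.

Section Triangle.

Variables P1 P2 P3 : pt.
Let la := dist P2 P3.
Let lb := dist P1 P3.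
Let lc := dist P1 P2.
Let D := det2 (psub P2 P1) (psub P3 P1).

Lemma heron : (la + lb + lc) * (- la + lb + lc) * (la - lb + lc) * (la + lb - lc) = 4 * D ^ 2.
Proof.
  pose proof (dist_sqr P2 P3) as Ha. pose proof (dist_sqr P1 P3) as Hb.
  pose proof (dist_sqr P1 P2) as Hc. fold la lb lc in Ha, Hb, Hc.
  transitivity (2 * ((la * la) * (lb * lb) + (lb * lb) * (lc * lc) + (lc * lc) * (la * la))
                - ((la * la) * (la * la) + (lb * lb) * (lb * lb) + (lc * lc) * (lc * lc))).
  { ring. }
  rewrite Ha, Hb, Hc. unfold D, det2, dot, psub; simpl. ring.
Qed.

Hypothesis HD : D <> 0.

Lemma triangle_strict : 0 < - la + lb + lc /\ 0 < la - lb + lc /\ 0 < la + lb - lc.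
Proof.
  pose proof (dist_ge0 P2 P3) as Ha. pose proof (dist_ge0 P1 P3) as Hb.
  pose proof (dist_ge0 P1 P2) as Hc. pose proof heron as H.
  fold la lb lc in Ha, Hb, Hc. fold la lb lc D in H.
  assert (HD2 : 0 < D ^ 2) by (apply Rcomplements.pow2_gt_0; exact HD).
  assert (Hs : 0 < la + lb + lc).
  { destruct (Rlt_or_le 0 (la + lb + lc)); [assumption|].
    assert (la = 0) by lra. assert (lb = 0) by lra. assert (lc = 0) by lra. nra. }
  apply pos_of_pairwise_sums_nonneg; try lra.
  apply (Rmult_lt_reg_l (la + lb + lc)); [exact Hs|]. nra.
Qed.

Lemma excenter_bary : excenter P1 P2 P3 = bary P1 P2 P3 (- la) lb lc.
Proof. reflexivity. Qed.

(* The excircle opposite [P1] touches [P2 P3] at distance [s - lc] from [P2], [s] the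
   semiperimeter. *)
Lemma extouch_pt_bary : extouch_pt P1 P2 P3 = bary P1 P2 P3 0 (la - lb + lc) (la + lb - lc).
Proof.
  destruct triangle_strict as (F1 & F2 & F3).
  pose proof (dist_sqr P2 P3) as Ha. pose proof (dist_sqr P1 P3) as Hb.
  pose proof (dist_sqr P1 P2) as Hc. fold la lb lc in Ha, Hb, Hc.
  unfold extouch_pt, foot. rewrite excenter_bary.
  clearbody la lb lc.
  destruct P1 as [x1 y1], P2 as [x2 y2], P3 as [x3 y3].
  unfold bary, dot, psub, padd, pscale in *; simpl in *.
  set (u := (x1 - x2) * (x3 - x2) + (y1 - y2) * (y3 - y2)).
  assert (Hu : 2 * u = lc * lc + la * la - lb * lb) by (rewrite Ha, Hb, Hc; unfold u; ring).
  assert (Hsq : (x3 - x2) * (x3 - x2) + (y3 - y2) * (y3 - y2) = la * la) by (rewrite Ha; ring).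
  match goal with |- context [ (?N / ((x3 - x2) * (x3 - x2) + (y3 - y2) * (y3 - y2)))%R ] =>
    replace N with ((- la * u + lc * (la * la)) / (- la + lb + lc))
      by (rewrite <- Hsq; unfold u; field; lra) end.
  rewrite Hsq. replace u with ((lc * lc + la * la - lb * lb) / 2) by lra.
  f_equal; field; lra.
Qed.

End Triangle.

Section Areas.

Variables P1 P2 P3 : pt.
Let la := dist P2 P3.
Let lb := dist P1 P3.
Let lc := dist P1 P2.
Let D := det2 (psub P2 P1) (psub P3 P1).
Hypothesis HD : D <> 0.

Let HD2 : det2 (psub P3 P2) (psub P1 P2) <> 0.
Proof. rewrite det2_rotate. exact HD. Qed.

Let HD3 : det2 (psub P1 P3) (psub P2 P3) <> 0.
Proof. rewrite det2_rotate. exact HD2. Qed.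

Lemma excentral_det :
  det2 (psub (excenter P2 P3 P1) (excenter P1 P2 P3)) (psub (excenter P3 P1 P2) (excenter P1 P2 P3))
  = 4 * la * lb * lc / ((- la + lb + lc) * (la - lb + lc) * (la + lb - lc)) * D.
Proof.
  destruct (triangle_strict P1 P2 P3 HD) as (F1 & F2 & F3).
  rewrite !excenter_bary, (bary_rotate P1 P2 P3), (bary_rotate P2 P3 P1),
    (bary_rotate P1 P2 P3), (dist_comm P3 P1), (dist_comm P2 P1), (dist_comm P3 P2).
  fold la lb lc in F1, F2, F3 |- *.
  rewrite det2_bary; try lra. fold D. f_equal. field. lra.
Qed.

Lemma extouch_det :
  det2 (psub (extouch_pt P2 P3 P1) (extouch_pt P1 P2 P3))
       (psub (extouch_pt P3 P1 P2) (extouch_pt P1 P2 P3))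
  = (- la + lb + lc) * (la - lb + lc) * (la + lb - lc) / (4 * la * lb * lc) * D.
Proof.
  destruct (triangle_strict P1 P2 P3 HD) as (F1 & F2 & F3).
  rewrite (extouch_pt_bary P1 P2 P3 HD), (extouch_pt_bary P2 P3 P1 HD2),
    (extouch_pt_bary P3 P1 P2 HD3), (bary_rotate P1 P2 P3), (bary_rotate P2 P3 P1),
    (bary_rotate P1 P2 P3), (dist_comm P3 P1), (dist_comm P2 P1), (dist_comm P3 P2).
  fold la lb lc in F1, F2, F3 |- *.
  rewrite det2_bary; try lra. fold D. f_equal. field. lra.
Qed.

Lemma excentral_extouch_area_ratio :
  excentral_area P1 P2 P3 / extouch_area P1 P2 P3 = (la * lb * lc * (la + lb + lc) / D ^ 2) ^ 2.
Proof.
  destruct (triangle_strict P1 P2 P3 HD) as (F1 & F2 & F3).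
  pose proof (heron P1 P2 P3) as H. fold la lb lc D in F1, F2, F3, H.
  assert (Hla : 0 < la) by lra. assert (Hlb : 0 < lb) by lra. assert (Hlc : 0 < lc) by lra.
  apply tri_area_div; [apply pow2_ge_0 | |].
  - rewrite extouch_det. apply Rmult_integral_contrapositive_currified; [|exact HD].
    apply Rgt_not_eq, Rdiv_lt_0_compat; repeat apply Rmult_lt_0_compat; lra.
  - rewrite excentral_det, extouch_det.
    replace ((- la + lb + lc) * (la - lb + lc) * (la + lb - lc)) with (4 * D ^ 2 / (la + lb + lc))
      by (rewrite <- H; field; lra).
    field. repeat split; lra.
Qed.

Lemma two_circumradius_div_inradius :
  2 * circumradius P1 P2 P3 / inradius P1 P2 P3 = la * lb * lc * (la + lb + lc) / D ^ 2.
Proof.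
  destruct (triangle_strict P1 P2 P3 HD) as (F1 & F2 & F3). fold la lb lc in F1, F2, F3.
  unfold circumradius, inradius, tri_area, semiperimeter. fold la lb lc D.
  rewrite <- (pow2_abs D).
  assert (Rabs D <> 0) by (apply Rabs_no_R0; exact HD).
  field. repeat split; lra.
Qed.

End Areas.

Lemma excentral_extouch_area_ratio_eq P1 P2 P3 : nondegenerate P1 P2 P3 ->
  excentral_area P1 P2 P3 / extouch_area P1 P2 P3
  = (2 * circumradius P1 P2 P3 / inradius P1 P2 P3) ^ 2.
Proof.
  intro HD. rewrite excentral_extouch_area_ratio, two_circumradius_div_inradius by exact HD.
  reflexivity.
Qed.

Lemma unit_sum_parallel_dot_eq u w n :
  dot u u = 1 -> dot w w = 1 -> 0 < dot n n -> det2 u w <> 0 ->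
  det2 (padd u w) n = 0 -> dot u n = dot w n.
Proof.
  destruct u as [ux uy], w as [wx wy], n as [nx ny]. unfold dot, det2, padd; simpl.
  intros Hu Hw Hn Huw Hpar.
  assert (Hprod : (ux * nx + uy * ny - (wx * nx + wy * ny))
                  * (ux * nx + uy * ny + (wx * nx + wy * ny)) = 0).
  { transitivity ((nx * nx + ny * ny) * ((ux * ux + uy * uy) - (wx * wx + wy * wy))
      - ((ux - wx) * ny - (uy - wy) * nx) * ((ux + wx) * ny - (uy + wy) * nx)); [ring|].
    rewrite Hu, Hw, Hpar. ring. }
  destruct (Rmult_integral _ _ Hprod) as [|Hopp]; [lra|].
  (* [n] is both orthogonal and parallel to [u + w], hence [u + w = 0]. *)
  assert (Hx : (ux + wx) * (nx * nx + ny * ny) = 0).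
  { transitivity ((ux * nx + uy * ny + (wx * nx + wy * ny)) * nx
      + ((ux + wx) * ny - (uy + wy) * nx) * ny); [ring|].
    rewrite Hopp, Hpar. ring. }
  assert (Hy : (uy + wy) * (nx * nx + ny * ny) = 0).
  { transitivity ((ux * nx + uy * ny + (wx * nx + wy * ny)) * ny
      - ((ux + wx) * ny - (uy + wy) * nx) * nx); [ring|].
    rewrite Hopp, Hpar. ring. }
  apply Rmult_integral in Hx as [Hx|]; [|lra]. apply Rmult_integral in Hy as [Hy|]; [|lra].
  exfalso. apply Huw. replace wx with (- ux) by lra. replace wy with (- uy) by lra. ring.
Qed.

Lemma bisector_dir_dot_eq P Q S n :
  det2 (psub Q P) (psub S P) <> 0 -> 0 < dot n n -> det2 (bisector_dir P Q S) n = 0 ->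
  dot (psub Q P) n / dist Q P = dot (psub S P) n / dist S P.
Proof.
  intros HD Hn Hpar.
  destruct (triangle_strict P Q S HD) as (F1 & F2 & F3).
  assert (Hc : 0 < dist Q P) by (rewrite dist_comm; lra).
  assert (Hb : 0 < dist S P) by (rewrite dist_comm; lra).
  assert (Hunit : forall X, 0 < dist X P ->
            dot (pscale (/ dist X P) (psub X P)) (pscale (/ dist X P) (psub X P)) = 1).
  { intros X HX. rewrite dot_pscale_l, dot_pscale_r, <- dist_sqr. field. lra. }
  unfold bisector_dir in Hpar.
  apply unit_sum_parallel_dot_eq in Hpar; auto.
  - rewrite !dot_pscale_l in Hpar. unfold Rdiv. rewrite !(Rmult_comm _ (/ _)). exact Hpar.
  - rewrite det2_pscale. apply Rmult_integral_contrapositive_currified; [|exact HD].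
    apply Rmult_integral_contrapositive_currified; apply Rinv_neq_0_compat; lra.
Qed.

Lemma one_sub_dot_unit_ge0 Zi Zj : dot Zi Zi = 1 -> dot Zj Zj = 1 -> 0 <= 1 - dot Zi Zj.
Proof.
  destruct Zi as [Xi Yi], Zj as [Xj Yj]. unfold dot; simpl. intros.
  pose proof (pow2_ge_0 (Xi - Xj)). pose proof (pow2_ge_0 (Yi - Yj)). nra.
Qed.

Definition stretch (a b : R) (Z : pt) : pt := (a * fst Z, b * snd Z).

Section Stretch.

Variables a b : R.
Hypothesis ha : 0 < a.
Hypothesis hb : 0 < b.

Lemma on_ellipse_stretch P : on_ellipse a b P -> exists Z, P = stretch a b Z /\ dot Z Z = 1.
Proof.
  intro H. exists (fst P / a, snd P / b). split.
  - destruct P as [x y]. unfold stretch; simpl. f_equal; field; lra.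
  - unfold on_ellipse in H. unfold dot; simpl. rewrite <- H. field. lra.
Qed.

Lemma dot_stretch_sub_normal Zi Zj : dot Zi Zi = 1 ->
  dot (psub (stretch a b Zj) (stretch a b Zi)) (ellipse_normal a b (stretch a b Zi))
  = dot Zi Zj - 1.
Proof.
  intro H. rewrite <- H. unfold dot, psub, stretch, ellipse_normal; simpl. field. lra.
Qed.

Lemma ellipse_normal_stretch_pos Z : dot Z Z = 1 ->
  0 < dot (ellipse_normal a b (stretch a b Z)) (ellipse_normal a b (stretch a b Z)).
Proof.
  destruct Z as [X Y]. unfold dot, ellipse_normal, stretch; simpl. intro H.
  replace (a * X / (a * (a * 1))) with (X / a) by (field; lra).
  replace (b * Y / (b * (b * 1))) with (Y / b) by (field; lra).
  replace X with (a * (X / a)) in H by (field; lra).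
  replace Y with (b * (Y / b)) in H by (field; lra).
  nra.
Qed.

Lemma normal_bisects_stretch Z1 Z2 Z3 : dot Z1 Z1 = 1 ->
  det2 (psub (stretch a b Z2) (stretch a b Z1)) (psub (stretch a b Z3) (stretch a b Z1)) <> 0 ->
  normal_bisects a b (stretch a b Z1) (stretch a b Z2) (stretch a b Z3) ->
  (1 - dot Z1 Z2) / dist (stretch a b Z1) (stretch a b Z2)
  = (1 - dot Z1 Z3) / dist (stretch a b Z1) (stretch a b Z3).
Proof.
  intros H1 HD Hbis.
  apply bisector_dir_dot_eq in Hbis; [|exact HD | exact (ellipse_normal_stretch_pos _ H1)].
  rewrite !dot_stretch_sub_normal, (dist_comm (stretch a b Z2)), (dist_comm (stretch a b Z3))
    in Hbis by exact H1.
  unfold Rdiv in *. lra.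
Qed.

Lemma dist_stretch_sqr Zi Zj : dot Zi Zi = 1 -> dot Zj Zj = 1 ->
  dist (stretch a b Zi) (stretch a b Zj) * dist (stretch a b Zi) (stretch a b Zj)
  = (1 - dot Zi Zj) * (a ^ 2 + b ^ 2 - (a ^ 2 - b ^ 2) * fst (Zi * Zj)%C).
Proof.
  rewrite dist_sqr. destruct Zi as [Xi Yi], Zj as [Xj Yj].
  unfold dot, psub, stretch; simpl. intros Hi Hj.
  transitivity ((a * Xi - a * Xj) * (a * Xi - a * Xj) + (b * Yi - b * Yj) * (b * Yi - b * Yj)
    - (b ^ 2 - b ^ 2 * Yj ^ 2 + a ^ 2 * Yj ^ 2) * (Xi * Xi + Yi * Yi - 1)
    - (b ^ 2 * Xi ^ 2 + a ^ 2 - a ^ 2 * Xi ^ 2) * (Xj * Xj + Yj * Yj - 1)).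
  { rewrite Hi, Hj. ring. }
  ring.
Qed.

Lemma chord_relation K Zi Zj : dot Zi Zi = 1 -> dot Zj Zj = 1 ->
  0 < dist (stretch a b Zi) (stretch a b Zj) ->
  1 - dot Zi Zj = K * dist (stretch a b Zi) (stretch a b Zj) ->
  0 < K /\ dot Zi Zj - K ^ 2 * (a ^ 2 - b ^ 2) * fst (Zi * Zj)%C = 1 - K ^ 2 * (a ^ 2 + b ^ 2).
Proof.
  intros Hi Hj Hl HK.
  pose proof (dist_stretch_sqr Zi Zj Hi Hj) as Hsq.
  pose proof (one_sub_dot_unit_ge0 Zi Zj Hi Hj) as Hm.
  set (l := dist (stretch a b Zi) (stretch a b Zj)) in *.
  set (m := 1 - dot Zi Zj) in *.
  set (c := a ^ 2 + b ^ 2 - (a ^ 2 - b ^ 2) * fst (Zi * Zj)%C) in *.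
  assert (Hmpos : 0 < m).
  { destruct (Req_dec m 0) as [Hm0|]; [|lra].
    rewrite Hm0, Rmult_0_l in Hsq. nra. }
  assert (Hm_eq : m = K ^ 2 * c).
  { apply (Rmult_eq_reg_l m); [|lra].
    transitivity (K ^ 2 * (l * l)); [rewrite HK; ring|]. rewrite Hsq. ring. }
  split.
  - destruct (Rlt_or_le 0 K); [assumption | nra].
  - unfold m, c in Hm_eq. lra.
Qed.

End Stretch.

Section Biquad.

Local Open Scope C_scope.

Definition biquad (v w : R) (s t : C) : C :=
  s * s + t * t - v * (s * s * t * t + 1) - 2 * w * s * t.

Lemma Cmult_eq0_cancel_l (p z : C) : p <> 0 -> p * z = 0 -> z = 0.
Proof. intros Hp Hpz. replace z with (/ p * (p * z)) by (field; exact Hp). rewrite Hpz. ring. Qed.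

Lemma Csub_neq0 (s t : C) : s <> t -> s - t <> 0.
Proof. intros Hst H. apply Hst. replace s with (t + (s - t)) by ring. rewrite H. ring. Qed.

Lemma biquad_two_roots (v w : R) (z1 z2 z3 : C) : z2 <> z3 ->
  biquad v w z1 z2 = 0 -> biquad v w z1 z3 = 0 ->
  (1 - v * z1 * z1) * (z2 + z3) = 2 * w * z1 /\
  z1 * z1 * z1 - v * z1 = (1 - v * z1 * z1) * (z1 * z2 * z3).
Proof.
  intros D23 R2 R3.
  assert (S : (1 - v * z1 * z1) * (z2 + z3) - 2 * w * z1 = 0).
  { apply (Cmult_eq0_cancel_l (z2 - z3)); [exact (Csub_neq0 _ _ D23)|].
    transitivity (biquad v w z1 z2 - biquad v w z1 z3); [unfold biquad; ring|].
    rewrite R2, R3. ring. }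
  split.
  - replace (2 * w * z1) with (2 * w * z1 + 0) by ring. rewrite <- S. ring.
  - assert (E : z1 * z1 * z1 - v * z1 - (1 - v * z1 * z1) * (z1 * z2 * z3)
               = z1 * (biquad v w z1 z2 - z2 * ((1 - v * z1 * z1) * (z2 + z3) - 2 * w * z1)))
      by (unfold biquad; ring).
    rewrite R2, S in E.
    replace (z1 * z1 * z1 - v * z1)
      with ((1 - v * z1 * z1) * (z1 * z2 * z3)
            + (z1 * z1 * z1 - v * z1 - (1 - v * z1 * z1) * (z1 * z2 * z3))) by ring.
    rewrite E. ring.
Qed.

Lemma biquad_comm (v w : R) (s t : C) : biquad v w s t = biquad v w t s.
Proof. unfold biquad. ring. Qed.

Lemma biquad_three_roots (v w : R) (z1 z2 z3 : C) :
  z1 <> 0 -> z2 <> 0 -> z1 <> z2 -> z1 <> z3 -> z2 <> z3 ->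
  biquad v w z1 z2 = 0 -> biquad v w z1 z3 = 0 -> biquad v w z2 z3 = 0 ->
  (v * v - 1 = 2 * w)%R /\ z1 * z2 + z1 * z3 + z2 * z3 = - v.
Proof.
  intros N1 N2 D12 D13 D23 R12 R13 R23.
  destruct (biquad_two_roots v w z1 z2 z3 D23 R12 R13) as [S1 Q1].
  rewrite biquad_comm in R12.
  destruct (biquad_two_roots v w z2 z1 z3 D13 R12 R23) as [_ Q2].
  set (al := v * (z1 * z2 * z3) + (z1 + z2 + z3)).
  set (be := v + (z1 * z2 + z1 * z3 + z2 * z3)).
  (* [z1] and [z2] are roots both of [z^3 - v z - (1 - v z^2) z1 z2 z3] and of
     [(z - z1) (z - z2) (z - z3)]; the difference is [al z^2 - be z]. *)
  assert (A1 : al * z1 = be).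
  { assert (E : z1 * (al * z1 - be) = 0).
    { transitivity (z1 * z1 * z1 - v * z1 - (1 - v * z1 * z1) * (z1 * z2 * z3)
                    - (z1 - z1) * (z1 - z2) * (z1 - z3)); [unfold al, be; ring|].
      rewrite Q1. ring. }
    apply Cmult_eq0_cancel_l in E; [|exact N1].
    replace be with (al * z1 - (al * z1 - be)) by ring. rewrite E. ring. }
  assert (A2 : al * z2 = be).
  { assert (E : z2 * (al * z2 - be) = 0).
    { transitivity (z2 * z2 * z2 - v * z2 - (1 - v * z2 * z2) * (z2 * z1 * z3)
                    - (z2 - z1) * (z2 - z2) * (z2 - z3)); [unfold al, be; ring|].
      rewrite Q2. ring. }
    apply Cmult_eq0_cancel_l in E; [|exact N2].
    replace be with (al * z2 - (al * z2 - be)) by ring. rewrite E. ring. }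
  assert (Hal : al = 0).
  { apply (Cmult_eq0_cancel_l (z1 - z2)); [exact (Csub_neq0 _ _ D12)|].
    transitivity (al * z1 - al * z2); [ring|]. rewrite A1, A2. ring. }
  assert (Hbe : be = 0) by (rewrite <- A1, Hal; ring).
  split.
  - assert (E : (v * v - 1 - 2 * w) * z1 = 0).
    { transitivity (((1 - v * z1 * z1) * (z2 + z3) - 2 * w * z1) - (1 - v * z1 * z1) * al
        - v * (z1 * z1 * z1 - v * z1 - (1 - v * z1 * z1) * (z1 * z2 * z3))); [unfold al; ring|].
      rewrite S1, Hal, Q1. ring. }
    rewrite Cmult_comm in E. apply Cmult_eq0_cancel_l in E; [|exact N1].
    apply (f_equal fst) in E. simpl in E. lra.
  - transitivity (be - v); [unfold be; ring|]. rewrite Hbe. ring.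
Qed.

(* On the unit circle [conj s = / s], so [biquad] is [2 s t] times the real relation. *)
Lemma biquad_unit (v w : R) (s t : C) : dot s s = 1%R -> dot t t = 1%R ->
  biquad v w s t = 2 * s * t * RtoC (dot s t - v * fst (s * t) - w).
Proof.
  destruct s as [Xi Yi], t as [Xj Yj]. unfold dot; simpl. intros Hi Hj.
  unfold biquad, RtoC, Cmult, Cplus, Cminus, Copp; simpl.
  apply injective_projections; simpl.
  - transitivity (2 * (Xi * Xj - Yi * Yj) * (Xi * Xj + Yi * Yj - v * (Xi * Xj - Yi * Yj) - w)
      + (-1 + 2 * Yj ^ 2 + v * Yj ^ 2 + v * Xj ^ 2) * (Xi * Xi + Yi * Yi - 1)
      + (1 - 2 * Xi ^ 2 + v) * (Xj * Xj + Yj * Yj - 1))%R.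
    + ring.
    + rewrite Hi, Hj. ring.
  - transitivity (2 * (Xi * Yj + Yi * Xj) * (Xi * Xj + Yi * Yj - v * (Xi * Xj - Yi * Yj) - w)
      + (-2 * Xj * Yj) * (Xi * Xi + Yi * Yi - 1) + (-2 * Xi * Yi) * (Xj * Xj + Yj * Yj - 1))%R.
    + ring.
    + rewrite Hi, Hj. ring.
Qed.

End Biquad.

Lemma det2_stretch a b Z1 Z2 Z3 :
  det2 (psub (stretch a b Z2) (stretch a b Z1)) (psub (stretch a b Z3) (stretch a b Z1))
  = a * b * det2 (psub Z2 Z1) (psub Z3 Z1).
Proof. unfold det2, psub, stretch; simpl; ring. Qed.

Lemma det2_unit_sqr Z1 Z2 Z3 : dot Z1 Z1 = 1 -> dot Z2 Z2 = 1 -> dot Z3 Z3 = 1 ->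
  det2 (psub Z2 Z1) (psub Z3 Z1) ^ 2
  = 2 * (1 - dot Z1 Z2) * (1 - dot Z1 Z3) * (1 - dot Z2 Z3).
Proof.
  destruct Z1 as [X1 Y1], Z2 as [X2 Y2], Z3 as [X3 Y3].
  unfold det2, dot, psub; simpl. intros H1 H2 H3.
  transitivity (2 * (1 - (X1 * X2 + Y1 * Y2)) * (1 - (X1 * X3 + Y1 * Y3))
      * (1 - (X2 * X3 + Y2 * Y3))
    + (X3 ^ 2 - 2 * Y2 * Y3 + 2 * Y2 ^ 2 * Y3 ^ 2 - 2 * X2 * X3 + 2 * X2 * Y2 * X3 * Y3 + X2 ^ 2)
      * (X1 * X1 + Y1 * Y1 - 1)
    + (2 * Y3 ^ 2 + X3 ^ 2 - 2 * Y1 * Y3 - 2 * X1 * X3 + 2 * X1 * Y1 * X3 * Y3 + X1 ^ 2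
       - 2 * X1 ^ 2 * Y3 ^ 2) * (X2 * X2 + Y2 * Y2 - 1)
    + (2 - X2 ^ 2 - 2 * Y1 * Y2 - 2 * X1 * X2 + 2 * X1 * Y1 * X2 * Y2 - X1 ^ 2
       + 2 * X1 ^ 2 * X2 ^ 2) * (X3 * X3 + Y3 * Y3 - 1)).
  - ring.
  - rewrite H1, H2, H3. ring.
Qed.

Lemma neq_of_dist_stretch_pos a b Zi Zj :
  0 < dist (stretch a b Zi) (stretch a b Zj) -> Zi <> Zj.
Proof.
  intros Hl ->. unfold dist, dot, psub in Hl. simpl in Hl.
  rewrite !Rminus_diag, Rmult_0_l, Rplus_0_l, sqrt_0 in Hl. lra.
Qed.

Lemma unit_neq0 Z : dot Z Z = 1 -> Z <> RtoC 0.
Proof. intros H ->. unfold dot in H. simpl in H. lra. Qed.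

Lemma chord_ratio_constraints a b K Z1 Z2 Z3 :
  dot Z1 Z1 = 1 -> dot Z2 Z2 = 1 -> dot Z3 Z3 = 1 ->
  0 < dist (stretch a b Z1) (stretch a b Z2) -> 0 < dist (stretch a b Z1) (stretch a b Z3) ->
  0 < dist (stretch a b Z2) (stretch a b Z3) ->
  1 - dot Z1 Z2 = K * dist (stretch a b Z1) (stretch a b Z2) ->
  1 - dot Z1 Z3 = K * dist (stretch a b Z1) (stretch a b Z3) ->
  1 - dot Z2 Z3 = K * dist (stretch a b Z2) (stretch a b Z3) ->
  0 < K /\ (a ^ 2 - b ^ 2) ^ 2 * (K ^ 2) ^ 2 + 2 * (a ^ 2 + b ^ 2) * K ^ 2 - 3 = 0 /\
  (1 - dot Z1 Z2) + (1 - dot Z1 Z3) + (1 - dot Z2 Z3) = (9 - (K ^ 2) ^ 2 * (a ^ 2 - b ^ 2) ^ 2) / 2.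
Proof.
  intros H1 H2 H3 L12 L13 L23 K12 K13 K23.
  destruct (chord_relation a b K Z1 Z2 H1 H2 L12 K12) as [HK C12].
  destruct (chord_relation a b K Z1 Z3 H1 H3 L13 K13) as [_ C13].
  destruct (chord_relation a b K Z2 Z3 H2 H3 L23 K23) as [_ C23].
  set (v := K ^ 2 * (a ^ 2 - b ^ 2)) in *.
  set (w := 1 - K ^ 2 * (a ^ 2 + b ^ 2)) in *.
  assert (Hroot : forall Zi Zj, dot Zi Zi = 1 -> dot Zj Zj = 1 ->
            dot Zi Zj - v * fst (Zi * Zj)%C = w -> biquad v w Zi Zj = RtoC 0).
  { intros Zi Zj Hi Hj Hij. rewrite biquad_unit by assumption.
    replace (dot Zi Zj - v * fst (Zi * Zj)%C - w) with 0 by lra. ring. }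
  destruct (biquad_three_roots v w Z1 Z2 Z3 (unit_neq0 _ H1) (unit_neq0 _ H2)
              (neq_of_dist_stretch_pos _ _ _ _ L12) (neq_of_dist_stretch_pos _ _ _ _ L13)
              (neq_of_dist_stretch_pos _ _ _ _ L23) (Hroot _ _ H1 H2 C12) (Hroot _ _ H1 H3 C13)
              (Hroot _ _ H2 H3 C23)) as [Hvw He2].
  assert (Hre : v * fst (Z1 * Z2)%C + v * fst (Z1 * Z3)%C + v * fst (Z2 * Z3)%C = - (v * v)).
  { transitivity (v * fst (Z1 * Z2 + Z1 * Z3 + Z2 * Z3)%C); [simpl; ring|].
    rewrite He2. simpl. ring. }
  split; [exact HK|]. split.
  - transitivity (v * v - 1 - 2 * w); [unfold v, w; ring | lra].
  - replace ((K ^ 2) ^ 2 * (a ^ 2 - b ^ 2) ^ 2) with (v * v) by (unfold v; ring). lra.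
Qed.

Lemma billiard3_two_circumradius_div_inradius a b P1 P2 P3 : 0 < b -> b < a ->
  billiard3 a b P1 P2 P3 ->
  exists k, 0 < k /\ (a ^ 2 - b ^ 2) ^ 2 * k ^ 2 + 2 * (a ^ 2 + b ^ 2) * k - 3 = 0 /\
  2 * circumradius P1 P2 P3 / inradius P1 P2 P3
  = (9 - k ^ 2 * (a ^ 2 - b ^ 2) ^ 2) / (4 * k ^ 2 * a ^ 2 * b ^ 2).
Proof.
  intros hb hab (HD & E1 & E2 & E3 & B1 & B2 & _).
  assert (ha : 0 < a) by lra.
  destruct (on_ellipse_stretch a b ha hb P1 E1) as (Z1 & -> & H1).
  destruct (on_ellipse_stretch a b ha hb P2 E2) as (Z2 & -> & H2).
  destruct (on_ellipse_stretch a b ha hb P3 E3) as (Z3 & -> & H3).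
  unfold nondegenerate in HD.
  pose proof HD as HD2. rewrite <- det2_rotate in HD2.
  apply (normal_bisects_stretch a b ha hb) in B1; [|exact H1|exact HD].
  apply (normal_bisects_stretch a b ha hb) in B2; [|exact H2|exact HD2].
  destruct (triangle_strict _ _ _ HD) as (F1 & F2 & F3).
  rewrite (dist_comm (stretch a b Z2) (stretch a b Z1)), (dot_comm Z2 Z1) in B2.
  set (l12 := dist (stretch a b Z1) (stretch a b Z2)) in *.
  set (l13 := dist (stretch a b Z1) (stretch a b Z3)) in *.
  set (l23 := dist (stretch a b Z2) (stretch a b Z3)) in *.
  assert (L12 : 0 < l12) by lra. assert (L13 : 0 < l13) by lra. assert (L23 : 0 < l23) by lra.
  set (K := (1 - dot Z1 Z2) / l12).
  assert (K12 : 1 - dot Z1 Z2 = K * l12) by (unfold K; field; lra).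
  assert (K13 : 1 - dot Z1 Z3 = K * l13) by (unfold K; rewrite B1; field; lra).
  assert (K23 : 1 - dot Z2 Z3 = K * l23) by (unfold K; rewrite <- B2; field; lra).
  destruct (chord_ratio_constraints a b K Z1 Z2 Z3 H1 H2 H3 L12 L13 L23 K12 K13 K23)
    as (HK & Hquad & Hsum).
  exists (K ^ 2). split; [apply pow_lt; exact HK|]. split; [exact Hquad|].
  rewrite two_circumradius_div_inradius by exact HD.
  rewrite det2_stretch.
  replace ((a * b * det2 (psub Z2 Z1) (psub Z3 Z1)) ^ 2)
    with (a ^ 2 * b ^ 2 * det2 (psub Z2 Z1) (psub Z3 Z1) ^ 2) by ring.
  rewrite det2_unit_sqr by assumption.
  replace (9 - (K ^ 2) ^ 2 * (a ^ 2 - b ^ 2) ^ 2)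
    with (2 * ((1 - dot Z1 Z2) + (1 - dot Z1 Z3) + (1 - dot Z2 Z3))) by lra.
  fold l12 l13 l23. rewrite K12, K13, K23. field. repeat split; nra.
Qed.

Lemma quadratic_pos_root_unique p q k k' : 0 <= p -> 0 < q -> 0 < k -> 0 < k' ->
  p * k ^ 2 + q * k - 3 = 0 -> p * k' ^ 2 + q * k' - 3 = 0 -> k = k'.
Proof.
  intros Hp Hq Hk Hk' E E'.
  assert (Hf : (k - k') * (p * (k + k') + q) = 0).
  { transitivity ((p * k ^ 2 + q * k - 3) - (p * k' ^ 2 + q * k' - 3)); [ring|].
    rewrite E, E'. ring. }
  apply Rmult_integral in Hf as [|Hf]; [lra|]. nra.
Qed.

Lemma billiard3_two_circumradius_div_inradius_eq a b P1 P2 P3 Q1 Q2 Q3 : 0 < b -> b < a ->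
  billiard3 a b P1 P2 P3 -> billiard3 a b Q1 Q2 Q3 ->
  2 * circumradius P1 P2 P3 / inradius P1 P2 P3 = 2 * circumradius Q1 Q2 Q3 / inradius Q1 Q2 Q3.
Proof.
  intros hb hab HP HQ.
  destruct (billiard3_two_circumradius_div_inradius a b P1 P2 P3 hb hab HP)
    as (k & Hk & Ek & ->).
  destruct (billiard3_two_circumradius_div_inradius a b Q1 Q2 Q3 hb hab HQ)
    as (k' & Hk' & Ek' & ->).
  replace k' with k; [reflexivity|].
  apply (quadratic_pos_root_unique ((a ^ 2 - b ^ 2) ^ 2) (2 * (a ^ 2 + b ^ 2))); try assumption.
  - apply pow2_ge_0.
  - nra.
Qed.

Theorem theorem2 (a b : R) (hb : 0 < b) (hab : b < a) :
  (forall P1 P2 P3 : pt, billiard3 a b P1 P2 P3 ->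
     excentral_area P1 P2 P3 / extouch_area P1 P2 P3
     = (2 * circumradius P1 P2 P3 / inradius P1 P2 P3) ^ 2) /\
  (exists c : R, forall P1 P2 P3 : pt, billiard3 a b P1 P2 P3 ->
     excentral_area P1 P2 P3 / extouch_area P1 P2 P3 = c).
Proof.
  split.
  - intros P1 P2 P3 [HD _]. exact (excentral_extouch_area_ratio_eq P1 P2 P3 HD).
  - destruct (classic (exists Q1 Q2 Q3, billiard3 a b Q1 Q2 Q3)) as [(Q1 & Q2 & Q3 & HQ)|Hnone].
    + exists (excentral_area Q1 Q2 Q3 / extouch_area Q1 Q2 Q3).
      intros P1 P2 P3 HP.
      rewrite !excentral_extouch_area_ratio_eq by (apply HP || apply HQ).
      rewrite (billiard3_two_circumradius_div_inradius_eq a b P1 P2 P3 Q1 Q2 Q3 hb hab HP HQ).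
      reflexivity.
    + exists 0. intros P1 P2 P3 HP. exfalso. apply Hnone. eauto.
Qed.
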